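(* Let $\mathcal C=\mathcal C(I,A,(\rho_i)_{i\in I},(C^a)_{a\in A})$ be a connected Cartan scheme and $\mathcal R=\mathcal R(\mathcal C,(R^a)_{a\in A})$ a root system of type $\mathcal C$. For $a\in A$ let $(R^a)^{\mathrm{re}}=\{\omega(\alpha_i)\mid\omega\in\mathrm{Hom}(b,a),\ b\in A,\ i\in I\}$. The following are equivalent: (1) $R^a$ is finite for all $a\in A$; (2) $R^a$ is finite for at least one $a\in A$; (3) $(R^a)^{\mathrm{re}}$ is finite for all $a\in A$; (4) the Weyl groupoid $\mathcal W(\mathcal C)$ is finite (has finitely many morphisms).
   Context: Let $I$ be a nonempty finite set and $\{\alpha_i\mid i\in I\}$ the standard basis of $\mathbb Z^I$; $\mathbb N_0=\{0,1,2,\dots\}$. A generalized Cartan matrix is $C=(c_{ij})_{i,j\in I}\in\mathbb Z^{I\times I}$ with $c_{ii}=2$, $c_{jk}\le0$ for $j\ne k$, and $c_{ij}=0\Rightarrow c_{ji}=0$. A Cartan scheme $\mathcal C=\mathcal C(I,A,(\rho_i)_{i\in I},(C^a)_{a\in A})$ consists of a nonempty set $A$, maps $\rho_i:A\to A$ and generalized Cartan matrices $C^a=(c^a_{jk})_{j,k\in I}$ such that (C1) $\rho_i^2=\mathrm{id}$ and (C2) $c^a_{ij}=c^{\rho_i(a)}_{ij}$ for all $a\in A$, $i,j\in I$. It is connected if the group generated by the $\rho_i$ acts transitively on $A$. For $i\in I$, $a\in A$ let $\sigma_i^a\in\mathrm{Aut}(\mathbb Z^I)$, $\sigma_i^a(\alpha_j)=\alpha_j-c^a_{ij}\alpha_i$.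 The Weyl groupoid $\mathcal W(\mathcal C)$ has object set $A$; $\mathrm{Hom}(a,b)$ consists of the triples $(b,f,a)$ with $f=\sigma_{i_n}^{a_{n-1}}\cdots\sigma_{i_1}^{a_0}$, where $n\ge0$, $i_1,\dots,i_n\in I$, $a_0=a$, $a_k=\rho_{i_k}(a_{k-1})$, $a_n=b$ (one writes $\omega(v)=f(v)$ for $\omega=(b,f,a)$); composition is multiplication in $\mathrm{Aut}(\mathbb Z^I)$. A root system of type $\mathcal C$ is a family $\mathcal R=\mathcal R(\mathcal C,(R^a)_{a\in A})$ of subsets $R^a\subset\mathbb Z^I$ such that, writing $R^a_+=R^a\cap\mathbb N_0^I$ and $m^a_{i,j}=|R^a\cap(\mathbb N_0\alpha_i+\mathbb N_0\alpha_j)|$, for all $a\in A$, $i,j\in I$: (R1) $R^a=R^a_+\cup(-R^a_+)$; (R2) $R^a\cap\mathbb Z\alpha_i=\{\alpha_i,-\alpha_i\}$; (R3) $\sigma_i^a(R^a)=R^{\rho_i(a)}$; (R4) if $i\neq j$ and $m^a_{i,j}$ is finite then $(\rho_i\rho_j)^{m^a_{i,j}}(a)=a$. *)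

From Stdlib Require Import List.
From HB Require Import structures.
From mathcomp Require Import all_boot all_order all_algebra.
Set Implicit Arguments. Unset Strict Implicit. Unset Printing Implicit Defensive.
Import Order.TTheory GRing.Theory Num.Theory.
Local Open Scope ring_scope.

Section CartanDefs.
Variable I : finType.

Definition vec := {ffun I -> int}.

Definition alpha (i : I) : vec := [ffun j => ((i == j) : nat)%:Z].

Definition gcm (c : I -> I -> int) : Prop :=
  [/\ forall i, c i i = 2,
      forall j k, j != k -> c j k <= 0
    & forall i j, c i j = 0 -> c j i = 0].

Variable A : Type.
Variable rho : I -> A -> A.
Variable C : A -> I -> I -> int.

Definition cartan_scheme : Prop :=
  [/\ forall a, gcm (C a),
      forall i a, rho i (rho i a) = a
    & forall a i j, C (rho i a) i j = C a i j].

Definition walk (a : A) (w : seq I) : A := foldl (fun b i => rho i b) a w.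

Definition connected : Prop := forall a b, exists w, walk a w = b.

Definition sigma (a : A) (i : I) (v : vec) : vec :=
  v - alpha i *~ (\sum_(j : I) C a i j * v j).

(* For a word w = [:: i_1; ...; i_n] starting at a: (a_n, sigma_{i_n}^{a_{n-1}} o ... o sigma_{i_1}^{a_0}) *)
Fixpoint wmap (a : A) (w : seq I) : A * (vec -> vec) :=
  match w with
  | [::] => (a, id)
  | i :: w' => let p := wmap (rho i a) w' in (p.1, p.2 \o sigma a i)
  end.

(* morphisms of the Weyl groupoid: triples (b, f, a) in Hom(a, b) *)
Definition weyl_mor (t : A * (vec -> vec) * A) : Prop :=
  exists w, wmap t.2 w = (t.1.1, t.1.2).

Definition finite_pred {T : Type} (P : T -> Prop) : Prop :=
  exists s : list T, forall x, P x -> In x s.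

Definition nonneg (v : vec) : Prop := forall j, 0 <= v j.

Definition card_is (P : vec -> Prop) (m : nat) : Prop :=
  exists s : seq vec, [/\ uniq s, size s = m & forall v, v \in s <-> P v].

Variable R : A -> vec -> Prop.

Definition Rpos (a : A) (v : vec) : Prop := R a v /\ nonneg v.

Definition root_system : Prop :=
  [/\ (forall a v, R a v <-> Rpos a v \/ Rpos a (- v)),
      (forall a i v, (R a v /\ exists k : int, v = alpha i *~ k) <->
                     (v = alpha i \/ v = - alpha i)),
      (forall a i v, R (rho i a) v <-> exists u, R a u /\ v = sigma a i u)
    & (forall a i j, i != j -> forall m : nat,
         card_is (fun v => R a v /\ exists p q : nat,
                                       v = alpha i *+ p + alpha j *+ q) m ->
         iter m (fun b => rho i (rho j b)) a = a)].

Definition Rre (a : A) (v : vec) : Prop :=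
  exists b w i, (wmap b w).1 = a /\ v = (wmap b w).2 (alpha i).

End CartanDefs.

From mathcomp Require Import all_boot all_order all_algebra.
From mathcomp Require Import zify ring.
From Stdlib Require Import Classical ClassicalEpsilon FunctionalExtensionality.
Set Implicit Arguments. Unset Strict Implicit. Unset Printing Implicit Defensive.
Import Order.TTheory GRing.Theory Num.Theory.
Local Open Scope ring_scope.

(* (1) => (2) is trivial, (2) => (1) holds because (R3) transports [R^a] bijectively
   along every walk and the scheme is connected, (1) => (3) because real roots
   are roots, and (4) => (3) because the real roots at [a] are the images of the
   simple roots under the finitely many morphisms into [a].

   (3) => (1): choose a morphism [w] into [a] making as many positive real roots
   negative as possible.  Maximality forces [w^-1 (alpha_i) < 0] for every [i], so
   [w] makes every positive root negative, and all of them lie in the finite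
   inversion set of a word for [w].

   (1) => (4): morphisms into [b] are determined by the images of the simple
   roots, which are roots at [b]; hence it suffices that there are finitely many
   objects, i.e. that a morphism acting as the identity on [Z^I] is an
   endomorphism.  In rank two, the
   alternating word of length [m = #R^a_+ (i, j)] inverts all positive roots of
   the subsystem, so by (R4) the word of length [2m] is a loop acting on the span
   of [alpha_i, alpha_j] by a nonnegative matrix of determinant one with
   nonnegative inverse, i.e. trivially; finiteness of [R^a] then makes it act
   trivially everywhere, which gives the braid relations.  Reducing two-letter words to alternating ones
   yields the exchange property [l(w s_i) >= l(w) -> w(alpha_i) > 0], and the
   last letter of a shortest word for an identity morphism would violate it. *)

Lemma nonneg_mul_eq1 (x y : int) : 0 <= x -> 0 <= y -> x * y = 1 -> x = 1 /\ y = 1.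
Proof.
case: x y => [m|//] [n|//] _ _ /eqP; rewrite -PoszM eqz_nat muln_eq1.
by case/andP => /eqP -> /eqP ->.
Qed.

(* Entries listed by columns: [M = (a c; b d)] has determinant one and a
   nonnegative left inverse [(a' c'; b' d')]. *)
Lemma nonneg_mx2_inv_id (a b c d a' b' c' d' : int) :
  0 <= a -> 0 <= b -> 0 <= c -> 0 <= d ->
  0 <= a' -> 0 <= b' -> 0 <= c' -> 0 <= d' ->
  a' * a + c' * b = 1 -> b' * a + d' * b = 0 ->
  a' * c + c' * d = 0 -> b' * c + d' * d = 1 ->
  a * d - b * c = 1 -> [/\ a = 1, b = 0, c = 0 & d = 1].
Proof.
move=> ha hb hc hd ha' hb' hc' hd' e1 e2 e3 e4 det.
have hbc : 0 <= b * c by rewrite mulr_ge0.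
have [a0 d0] : a != 0 /\ d != 0.
  by split; apply/eqP => h; move: det; rewrite h ?mul0r ?mulr0; lia.
move/eqP: e2; rewrite paddr_eq0 ?mulr_ge0 // !mulf_eq0 (negbTE a0) orbF.
move=> /andP[/eqP b'0 /orP[/eqP d'0|/eqP b0]]; first by move: e4; rewrite b'0 d'0; lia.
move/eqP: e3; rewrite paddr_eq0 ?mulr_ge0 // !mulf_eq0 (negbTE d0) orbF.
move=> /andP[/orP[/eqP a'0|/eqP c0] /eqP c'0]; first by move: e1; rewrite a'0 c'0; lia.
move: e1 e4; rewrite b0 c0 c'0 b'0 !mul0r !addr0 !add0r.
by move=> /nonneg_mul_eq1-[] // _ -> /nonneg_mul_eq1-[] // _ ->.
Qed.

Lemma count_le_sub_in (T : eqType) (p q : pred T) (s : seq T) :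
  {in s, subpred p q} -> (count p s <= count q s)%N.
Proof.
move=> pq; rewrite (@eq_in_count _ p (predI p q)); first by apply: sub_count => z /andP[].
by move=> z zs /=; case: (boolP (p z)) => // /(pq z zs) ->.
Qed.

Lemma count_lt_sub_in (T : eqType) (p q : pred T) (s : seq T) x :
  {in s, subpred p q} -> x \in s -> q x -> ~~ p x -> (count p s < count q s)%N.
Proof.
elim: s => [//|y s IH] pq /=; rewrite inE => /orP[/eqP <-|xs] qx px.
  rewrite qx (negbTE px) add0n add1n ltnS.
  by apply: count_le_sub_in => z zs; apply: pq; rewrite inE zs orbT.
rewrite -addnS leq_add ?IH // => [|z zs]; last by apply: pq; rewrite inE zs orbT.
by case: (boolP (p y)) => // py; rewrite (pq y (mem_head _ _) py).
Qed.

Definition asbool (P : Prop) : bool := if excluded_middle_informative P then true else false.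

Lemma asboolP (P : Prop) : reflect P (asbool P).
Proof. by rewrite /asbool; case: excluded_middle_informative => h; constructor. Qed.

Lemma InP (T : eqType) (x : T) (s : seq T) : List.In x s <-> x \in s.
Proof.
elim: s => [//|y s IH] /=; rewrite inE.
by split=> [[->|/IH->]|/orP[/eqP->|/IH]]; rewrite ?eqxx ?orbT; auto.
Qed.

Lemma finite_pred_enum (T : eqType) (P : T -> Prop) :
  finite_pred P -> exists s, uniq s /\ forall x, x \in s <-> P x.
Proof.
case=> l hl; exists (undup (filter (fun x => asbool (P x)) l)); split=> [|x].
  exact: undup_uniq.
rewrite mem_undup mem_filter; split=> [/andP[/asboolP] //|Px].
by rewrite (introT (asboolP _) Px) /=; apply/InP/hl.
Qed.

Lemma ex_minP_prop (P : nat -> Prop) :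
  (exists n, P n) -> exists n, P n /\ forall m, P m -> (n <= m)%N.
Proof.
case=> n Pn; have exb : exists n, asbool (P n) by exists n; apply/asboolP.
by case: (ex_minnP exb) => m /asboolP Pm min; exists m; split=> // k /asboolP /min.
Qed.

Lemma ex_maxP_prop (P : nat -> Prop) b :
  (exists n, P n) -> (forall n, P n -> (n <= b)%N) -> exists n, P n /\ forall m, P m -> (m <= n)%N.
Proof.
case=> n Pn ub; have exb : exists n, asbool (P n) by exists n; apply/asboolP.
have ubb : forall n, asbool (P n) -> (n <= b)%N by move=> k /asboolP /ub.
by case: (ex_maxnP exb ubb) => m /asboolP Pm max; exists m; split=> // k /asboolP /max.
Qed.

Lemma finite_pred_of_code (X : Type) (J : finType) (T : eqType) (D : X -> Prop)
    (L : seq T) (code : X -> J -> T) :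
  (forall x, D x -> forall k, code x k \in L) ->
  (forall x y, D x -> D y -> code x =1 code y -> x = y) -> finite_pred D.
Proof.
move=> hc hinj; have [[x0 _]|none] := classic (exists x, D x); last first.
  by exists [::] => x Dx; case: none; exists x.
pose ch (t : {ffun J -> 'I_(size L)}) :=
  epsilon (inhabits x0) (fun x => D x /\ forall k, code x k = nth (code x0 k) L (t k)).
exists (List.map ch (enum {ffun J -> 'I_(size L)})) => x Dx.
have lt k : (index (code x k) L < size L)%N by rewrite index_mem hc.
pose t := [ffun k => Ordinal (lt k)].
have [Dt codet] : D (ch t) /\ forall k, code (ch t) k = nth (code x0 k) L (t k).
  apply: (epsilon_spec (inhabits x0) (fun y => D y /\ _)).
  by exists x; split=> // k; rewrite ffunE nth_index ?hc.
have -> : x = ch t by apply: hinj => // k; rewrite codet ffunE nth_index ?hc.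
by apply/List.in_map/InP; rewrite mem_enum.
Qed.

Lemma finite_pred_pairs (X Y : Type) (objs : seq Y) (D : Y -> Y -> X -> Prop) :
  (forall a b, finite_pred (D a b)) ->
  exists s, forall a b t, List.In a objs -> List.In b objs -> D a b t -> List.In t s.
Proof.
move=> fD; pose S a b := proj1_sig (constructive_indefinite_description _ (fD a b)).
exists (List.flat_map (fun a => List.flat_map (S a) objs) objs) => a b t ha hb hd.
apply/List.in_flat_map; exists a; split=> //; apply/List.in_flat_map; exists b; split=> //.
by rewrite /S; case: constructive_indefinite_description => s hs /=; apply: hs.
Qed.

Section WeylGroupoid.
Variables (I : finType) (A : Type) (rho : I -> A -> A) (C : A -> I -> I -> int).
Hypothesis HC : cartan_scheme rho C.

Local Notation vec := (vec I).
Local Notation walk := (walk rho).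
Local Notation sigma := (sigma C).

(** * Reflections and the action of words *)

Lemma alphaE (i k : I) : alpha i k = ((i == k) : nat)%:Z.
Proof. by rewrite ffunE. Qed.

Lemma alpha_id (i : I) : alpha i i = 1.
Proof. by rewrite alphaE eqxx. Qed.

Lemma alpha_neq (i k : I) : i != k -> alpha i k = 0.
Proof. by rewrite alphaE => /negPf ->. Qed.

Lemma alpha_neq0 (i : I) : alpha i != 0.
Proof. by apply/eqP => /ffunP /(_ i); rewrite alpha_id ffunE. Qed.

Lemma nonneg_alpha (i : I) : nonneg (alpha i).
Proof. by move=> k; rewrite alphaE. Qed.

Lemma vecB (u v : vec) k : (u - v) k = u k - v k.
Proof. by rewrite !ffunE. Qed.

Lemma vec_expand (v : vec) : v = \sum_k alpha k *~ v k.
Proof.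
apply/ffunP => k; rewrite sum_ffunE (bigD1 k) //= ffunMzE alpha_id mulrzz mul1r.
by rewrite big1 ?addr0 // => l lk; rewrite ffunMzE alpha_neq ?mul0rz.
Qed.

Lemma nonneg_sum (F : I -> vec) : (forall k, nonneg (F k)) -> nonneg (\sum_k F k).
Proof. by move=> h l; rewrite sum_ffunE; apply: sumr_ge0 => k _; apply: h. Qed.

Definition pairing x i (v : vec) := \sum_j C x i j * v j.

Lemma pairingD x i u v : pairing x i (u + v) = pairing x i u + pairing x i v.
Proof. by rewrite -big_split; apply: eq_bigr => j _; rewrite ffunE mulrDr. Qed.

Lemma pairingN x i v : pairing x i (- v) = - pairing x i v.
Proof. by rewrite -sumrN; apply: eq_bigr => j _; rewrite ffunE mulrN. Qed.

Lemma pairingMz x i v k : pairing x i (v *~ k) = pairing x i v * k.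
Proof. by rewrite /pairing big_distrl; apply: eq_bigr => j _; rewrite ffunMzE mulrzz mulrA. Qed.

Lemma pairing_alpha x i k : pairing x i (alpha k) = C x i k.
Proof.
rewrite /pairing (bigD1 k) //= alpha_id mulr1 big1 ?addr0 // => j jk.
by rewrite alpha_neq 1?eq_sym // mulr0.
Qed.

Lemma pairing_rho x i v : pairing (rho i x) i v = pairing x i v.
Proof. by case: HC => _ _ HC2; apply: eq_bigr => j _; rewrite HC2. Qed.

Lemma rhoK x i : rho i (rho i x) = x.
Proof. by case: HC => _ ->. Qed.

Lemma sigmaE x i v : sigma x i v = v - alpha i *~ pairing x i v.
Proof. by []. Qed.

Lemma sigma_coord x i v k : sigma x i v k = v k - alpha i k * pairing x i v.
Proof. by rewrite sigmaE !ffunE ffunMzE mulrzz ffunE. Qed.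

Lemma sigma_coord_neq x i v k : k != i -> sigma x i v k = v k.
Proof. by move=> ki; rewrite sigma_coord alpha_neq 1?eq_sym // mul0r subr0. Qed.

Lemma sigmaD x i u v : sigma x i (u + v) = sigma x i u + sigma x i v.
Proof. by rewrite !sigmaE pairingD mulrzDr opprD addrACA. Qed.

Lemma sigmaN x i v : sigma x i (- v) = - sigma x i v.
Proof. by rewrite !sigmaE pairingN mulrNz opprK opprB addrC. Qed.

Lemma sigmaMz x i v k : sigma x i (v *~ k) = sigma x i v *~ k.
Proof. by rewrite !sigmaE pairingMz mulrzBl mulrzA. Qed.

Lemma sigma0 x i : sigma x i 0 = 0.
Proof. by rewrite -(mulr0z (0 : vec)) sigmaMz mulr0z. Qed.

Lemma cartan_diag x i : C x i i = 2.
Proof. by case: HC => gcmC _ _; case: (gcmC x). Qed.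

Lemma sigma_alpha x i : sigma x i (alpha i) = - alpha i.
Proof.
rewrite sigmaE pairing_alpha cartan_diag; change (alpha i *~ 2) with (alpha i *+ 2).
by rewrite mulr2n opprD addNKr.
Qed.

Lemma sigmaK x i v : sigma (rho i x) i (sigma x i v) = v.
Proof.
have pairing_sigma : pairing x i (sigma x i v) = - pairing x i v.
  by rewrite sigmaE pairingD pairingN pairingMz pairing_alpha cartan_diag; ring.
by rewrite [LHS]sigmaE pairing_rho pairing_sigma mulrNz opprK subrK.
Qed.

Lemma sigmaKV x i v : sigma x i (sigma (rho i x) i v) = v.
Proof. by rewrite -{1}(rhoK x i) sigmaK. Qed.

Definition wact x w : vec -> vec := (wmap rho C x w).2.

Lemma walk_cons x i w : walk x (i :: w) = walk (rho i x) w.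
Proof. by []. Qed.

Lemma walk_cat x w1 w2 : walk x (w1 ++ w2) = walk (walk x w1) w2.
Proof. exact: foldl_cat. Qed.

Lemma walk_rcons x w c : walk x (rcons w c) = rho c (walk x w).
Proof. by rewrite -cats1 walk_cat. Qed.

Lemma wmap_fst x w : (wmap rho C x w).1 = walk x w.
Proof. by elim: w x => [//|i w IH] x /=; rewrite IH. Qed.

Lemma wact_cons x i w v : wact x (i :: w) v = wact (rho i x) w (sigma x i v).
Proof. by []. Qed.

Lemma wact_cat x w1 w2 v : wact x (w1 ++ w2) v = wact (walk x w1) w2 (wact x w1 v).
Proof. by elim: w1 x v => [//|i w IH] x v; rewrite cat_cons wact_cons IH. Qed.

Lemma wact_rcons x w c v : wact x (rcons w c) v = sigma (walk x w) c (wact x w v).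
Proof. by rewrite -cats1 wact_cat. Qed.

Lemma wact0 x w : wact x w 0 = 0.
Proof. by elim: w x => [//|i w IH] x; rewrite wact_cons sigma0 IH. Qed.

Lemma wactD x w u v : wact x w (u + v) = wact x w u + wact x w v.
Proof. by elim: w x u v => [//|i w IH] x u v; rewrite !wact_cons sigmaD IH. Qed.

Lemma wactN x w v : wact x w (- v) = - wact x w v.
Proof. by elim: w x v => [//|i w IH] x v; rewrite !wact_cons sigmaN IH. Qed.

Lemma wactMz x w v k : wact x w (v *~ k) = wact x w v *~ k.
Proof. by elim: w x v => [//|i w IH] x v; rewrite !wact_cons sigmaMz IH. Qed.

Lemma wactMn x w v (k : nat) : wact x w (v *+ k) = wact x w v *+ k.
Proof. by elim: k => [|k IH]; rewrite ?mulr0n ?wact0 // !mulrS wactD IH. Qed.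

Lemma wact_sum x w (F : I -> vec) : wact x w (\sum_k F k) = \sum_k wact x w (F k).
Proof. exact: (big_morph _ (wactD x w) (wact0 x w)). Qed.

Lemma wact_eq_on_alpha x w y w' :
  (forall k, wact x w (alpha k) = wact y w' (alpha k)) -> wact x w =1 wact y w'.
Proof.
move=> h v; rewrite (vec_expand v) !wact_sum; apply: eq_bigr => k _.
by rewrite !wactMz h.
Qed.

Lemma walk_revK x w : walk (walk x w) (rev w) = x.
Proof. by elim: w x => [//|i w IH] x; rewrite rev_cons walk_rcons IH rhoK. Qed.

Definition wact_inv x w := wact (walk x w) (rev w).

Lemma wact_inv_cons x i w v :
  wact_inv x (i :: w) v = sigma (rho i x) i (wact_inv (rho i x) w v).
Proof. by rewrite /wact_inv rev_cons wact_rcons walk_cons walk_revK. Qed.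

Lemma wactK x w : cancel (wact x w) (wact_inv x w).
Proof. by elim: w x => [//|i w IH] x v; rewrite wact_inv_cons wact_cons IH sigmaK. Qed.

Lemma wact_invK x w : cancel (wact_inv x w) (wact x w).
Proof. by elim: w x => [//|i w IH] x v; rewrite wact_inv_cons wact_cons sigmaKV IH. Qed.

Lemma wact_invN x w v : wact_inv x w (- v) = - wact_inv x w v.
Proof. exact: wactN. Qed.

Lemma wact_inv_rcons x w c v :
  wact_inv x (rcons w c) v = wact_inv x w (sigma (rho c (walk x w)) c v).
Proof. by rewrite /wact_inv rev_rcons walk_rcons wact_cons rhoK. Qed.

Definition wequiv x w1 w2 := walk x w1 = walk x w2 /\ wact x w1 =1 wact x w2.

Lemma wequiv_refl x w : wequiv x w w.
Proof. by []. Qed.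

Lemma wequiv_sym x w1 w2 : wequiv x w1 w2 -> wequiv x w2 w1.
Proof. by case=> h1 h2; split=> // v; rewrite h2. Qed.

Lemma wequiv_trans x w1 w2 w3 : wequiv x w1 w2 -> wequiv x w2 w3 -> wequiv x w1 w3.
Proof. by case=> h1 h2 [h3 h4]; split=> [|v]; [rewrite h1 | rewrite h2]. Qed.

Lemma wequiv_cons x i w1 w2 : wequiv (rho i x) w1 w2 -> wequiv x (i :: w1) (i :: w2).
Proof. by case=> h1 h2; split=> // v; rewrite !wact_cons h2. Qed.

Lemma wequiv_catr x w1 w2 p : wequiv x w1 w2 -> wequiv x (w1 ++ p) (w2 ++ p).
Proof. by case=> h1 h2; split=> [|v]; rewrite ?walk_cat ?wact_cat h1 ?h2. Qed.

Lemma wequiv_catl x p w1 w2 : wequiv (walk x p) w1 w2 -> wequiv x (p ++ w1) (p ++ w2).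
Proof. by case=> h1 h2; split=> [|v]; rewrite ?walk_cat ?wact_cat ?h1 ?h2. Qed.

Lemma wequiv_cancel x i w : wequiv x (i :: i :: w) w.
Proof. by split=> [|v]; rewrite ?walk_cons ?wact_cons ?sigmaK rhoK. Qed.

(** * Roots and inversion sets *)

Local Notation nonpos v := (nonneg (- v)).

Lemma nonneg_nonpos_eq0 (v : vec) : nonneg v -> nonpos v -> v = 0.
Proof.
move=> h1 h2; apply/ffunP => k; rewrite ffunE; apply/eqP.
by rewrite eq_le h1 andbT; move: (h2 k); rewrite ffunE oppr_ge0.
Qed.

Variable R : A -> vec -> Prop.
Hypothesis HR : root_system rho C R.

Lemma root_sign x v : R x v -> nonneg v \/ nonpos v.
Proof. by case: HR => HR1 _ _ _ /HR1 [[_ h]|[_ h]]; [left|right]. Qed.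

Lemma rootN x v : R x v -> R x (- v).
Proof. by case: HR => HR1 _ _ _ /HR1 h; apply/HR1; rewrite opprK or_comm. Qed.

Lemma root_alpha x i : R x (alpha i).
Proof. by case: HR => _ HR2 _ _; case: (proj2 (HR2 x i (alpha i)) (or_introl erefl)). Qed.

Lemma root_multiple x i k : R x (alpha i *~ k) -> alpha i *~ k = alpha i \/ alpha i *~ k = - alpha i.
Proof. by case: HR => _ HR2 _ _ h; apply/(HR2 x i); split; last exists k. Qed.

Lemma root_sigma x i v : R x v -> R (rho i x) (sigma x i v).
Proof. by case: HR => _ _ HR3 _ h; apply/HR3; exists v. Qed.

Lemma root_wact x w v : R x v -> R (walk x w) (wact x w v).
Proof.
by elim: w x v => [//|i w IH] x v h; rewrite wact_cons; apply/IH/root_sigma.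
Qed.

Lemma root_wact_inv x w v : R (walk x w) v -> R x (wact_inv x w v).
Proof. by move/(root_wact (rev w)); rewrite walk_revK. Qed.

Variable i0 : I.

Lemma root_neq0 x v : R x v -> v != 0.
Proof.
move=> hv; apply/eqP => v0; move: hv; rewrite v0 -(mulr0z (alpha i0)).
move/root_multiple; rewrite mulr0z => -[] /eqP; rewrite eq_sym ?oppr_eq0.
  by rewrite (negbTE (alpha_neq0 i0)).
by rewrite (negbTE (alpha_neq0 i0)).
Qed.

Lemma root_nonneg_nonpos x v : R x v -> nonneg v -> nonpos v -> False.
Proof. by move=> /root_neq0 /eqP hv hn hp; apply/hv/nonneg_nonpos_eq0. Qed.

Lemma sigma_pos_root x i v : R x v -> nonneg v -> v != alpha i -> nonneg (sigma x i v).
Proof.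
move=> hv hn hvi.
have /existsP [k /andP [ki vk]] : [exists k, (k != i) && (v k != 0)].
  apply: contraT => /existsPn hk.
  have vE : v = alpha i *~ v i.
    apply/ffunP => k; rewrite ffunMzE mulrzz; have [->|ki] := eqVneq k i.
      by rewrite alpha_id mul1r.
    by rewrite alpha_neq 1?eq_sym // mul0r; move: (hk k); rewrite ki /= negbK => /eqP.
  move: hv; rewrite vE => /root_multiple [hvi'|hvi']; first by rewrite vE hvi' eqxx in hvi.
  by move: (hn i); rewrite vE hvi' ffunE alpha_id.
have vk_gt0 : 0 < v k by rewrite lt_def vk hn.
case: (root_sign (root_sigma i hv)) => // hs.
by move: (hs k); rewrite ffunE sigma_coord_neq // oppr_ge0 leNgt vk_gt0.
Qed.

Fixpoint inversions x w : seq vec :=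
  if w is i :: w' then alpha i :: map (sigma (rho i x) i) (inversions (rho i x) w')
  else [::].

Lemma size_inversions x w : size (inversions x w) = size w.
Proof. by elim: w x => [//|i w IH] x /=; rewrite size_map IH. Qed.

Lemma inversions_rcons x w c :
  inversions x (rcons w c) = rcons (inversions x w) (wact_inv x w (alpha c)).
Proof. by elim: w x => [//|i w IH] x /=; rewrite IH map_rcons wact_inv_cons. Qed.

Lemma mem_inversions x w b :
  R x b -> nonneg b -> nonpos (wact x w b) -> b \in inversions x w.
Proof.
elim: w x b => [|i w IH] x b hb hn hp; first by case: (root_nonneg_nonpos hb hn hp).
rewrite /= inE; have [//|bi] := eqVneq b (alpha i).
by rewrite -(sigmaK x i b) map_f // IH //; [apply: root_sigma | apply: sigma_pos_root].
Qed.

Lemma nonpos_wact_rcons x w c b : R x b -> nonneg b -> nonpos (wact x w b) ->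
  nonneg (wact_inv x w (alpha c)) -> nonpos (wact x (rcons w c) b).
Proof.
move=> hb hn hp hc; rewrite wact_rcons -sigmaN.
have [e|ne] := eqVneq (- wact x w b) (alpha c).
  have eb : b = - wact_inv x w (alpha c) by rewrite -e wact_invN opprK wactK.
  by case: (root_nonneg_nonpos hb hn); rewrite eb opprK.
by apply: sigma_pos_root => //; apply/rootN/root_wact.
Qed.

Lemma mem_inversions_of_nonpos x w b : R x b -> nonneg b ->
  (forall k, wact x w b k != 0 -> nonpos (wact_inv x w (alpha k))) ->
  b \in inversions x w.
Proof.
move=> hb hn hk; apply: mem_inversions => //.
set d := wact x w b; case: (root_sign (root_wact w hb)) => // dn.
case: (root_nonneg_nonpos hb hn); rewrite -(wactK x w b) -/d (vec_expand d).
rewrite /wact_inv wact_sum -sumrN; apply: nonneg_sum => k l.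
rewrite wactMz -mulNrz ffunMzE mulrzz.
have [dk0|/hk hkl] := eqVneq (d k) 0; first by rewrite dk0 mulr0.
by apply: mulr_ge0; [apply: hkl | apply: dn].
Qed.

Lemma root_real x v : Rre rho C x v -> R x v.
Proof. by case=> b [w [i [<- ->]]]; rewrite wmap_fst; apply/root_wact/root_alpha. Qed.

Lemma real_wact_inv_alpha x w i : Rre rho C x (wact_inv x w (alpha i)).
Proof. by exists (walk x w), (rev w), i; rewrite wmap_fst walk_revK. Qed.

Lemma finite_roots_walk x w : finite_pred (R x) -> finite_pred (R (walk x w)).
Proof.
case=> l hl; exists (List.map (wact x w) l) => v hv.
by rewrite -(wact_invK x w v); apply/List.in_map/hl/root_wact_inv.
Qed.

(* Choose [w] inverting as many positive real roots as possible; then no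
   [wact_inv x w (alpha i)] can be positive, so [w] inverts every positive root. *)
Lemma finite_roots_of_real x : finite_pred (Rre rho C x) -> finite_pred (R x).
Proof.
move=> [l hl]; have [L [_ hL]] : exists L, uniq L /\ forall v, v \in L <-> Rre rho C x v /\ nonneg v.
  by apply: finite_pred_enum; exists l => v [/hl].
pose cnt w := count (fun b => asbool (nonpos (wact x w b))) L.
have cnt_ex : exists k, exists w, cnt w = k by exists (cnt [::]), [::].
have cnt_ub k : (exists w, cnt w = k) -> (k <= size L)%N by case=> w <-; apply: count_size.
have [_ [[w <-] max]] := ex_maxP_prop cnt_ex cnt_ub.
have nonpos_alpha k : nonpos (wact_inv x w (alpha k)).
  set b := wact_inv x w (alpha k).
  case: (root_sign (root_real (real_wact_inv_alpha x w k))) => // bn.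
  have : (cnt w < cnt (rcons w k))%N.
    apply: (@count_lt_sub_in _ _ _ _ b).
    - move=> b' /hL [/root_real hb' bn'] /asboolP hp; apply/asboolP.
      exact: nonpos_wact_rcons.
    - by apply/hL; split=> //; apply: real_wact_inv_alpha.
    - by apply/asboolP; rewrite wact_rcons wact_invK sigma_alpha opprK; apply: nonneg_alpha.
    - apply/negP => /asboolP; rewrite wact_invK.
      exact: root_nonneg_nonpos (root_alpha _ k) (nonneg_alpha k).
  by rewrite ltnNge max //; exists (rcons w k).
exists (inversions x w ++ map -%R (inversions x w)) => v hv; apply/InP.
rewrite mem_cat; case: (root_sign hv) => hs.
  by rewrite mem_inversions_of_nonpos.
by rewrite -(opprK v) map_f ?orbT // mem_inversions_of_nonpos //; apply: rootN.
Qed.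

(** * Rank two *)

Definition in_span2 i j (v : vec) := forall k, k != i -> k != j -> v k = 0.

Definition word2 i j (w : seq I) := all (fun c => (c == i) || (c == j)) w.

Lemma in_span2_sym i j v : in_span2 i j v -> in_span2 j i v.
Proof. by move=> h k ki kj; apply: h. Qed.

Lemma alpha_span2l i j : in_span2 i j (alpha i).
Proof. by move=> k ki _; rewrite alpha_neq // eq_sym. Qed.

Lemma alpha_span2r i j : in_span2 i j (alpha j).
Proof. by move=> k _ kj; rewrite alpha_neq // eq_sym. Qed.

Lemma alpha_span2 i j c : (c == i) || (c == j) -> in_span2 i j (alpha c).
Proof. by case/orP => /eqP ->; [apply: alpha_span2l | apply: alpha_span2r]. Qed.

Lemma span2_expand i j v : i != j -> in_span2 i j v -> v = alpha i *~ v i + alpha j *~ v j.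
Proof.
move=> ij hv; apply/ffunP => k; rewrite !ffunE !ffunMzE !mulrzz.
have [->|ki] := eqVneq k i; first by rewrite alpha_id alpha_neq 1?eq_sym // mul1r mul0r addr0.
have [->|kj] := eqVneq k j; first by rewrite alpha_id alpha_neq // mul1r mul0r add0r.
by rewrite hv // !alpha_neq 1?eq_sym // !mul0r addr0.
Qed.

Lemma word2_cat i j w1 w2 : word2 i j (w1 ++ w2) = word2 i j w1 && word2 i j w2.
Proof. exact: all_cat. Qed.

Lemma word2_rcons i j w c : word2 i j (rcons w c) = word2 i j w && ((c == i) || (c == j)).
Proof. by rewrite -cats1 word2_cat /= andbT. Qed.

Lemma word2_rev i j w : word2 i j (rev w) = word2 i j w.
Proof. exact: all_rev. Qed.

Lemma wact_coord_out x i j w v k : word2 i j w -> k != i -> k != j -> wact x w v k = v k.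
Proof.
elim: w x v => [//|c w IH] x v /= /andP[hc hw] ki kj.
by rewrite wact_cons IH // sigma_coord_neq //; case/orP: hc => /eqP ->.
Qed.

Lemma wact_span2 x i j w v : word2 i j w -> in_span2 i j v -> in_span2 i j (wact x w v).
Proof. by move=> hw hv k ki kj; rewrite (wact_coord_out _ _ hw) // hv. Qed.

Lemma wact_inv_span2 x i j w v : word2 i j w -> in_span2 i j v -> in_span2 i j (wact_inv x w v).
Proof. by rewrite -word2_rev; apply: wact_span2. Qed.

Fixpoint alt (s t : I) n : seq I := if n is n'.+1 then s :: alt t s n' else [::].

Definition alt_letter (s t : I) n := if odd n then t else s.

Lemma size_alt s t n : size (alt s t n) = n.
Proof. by elim: n s t => [//|n IH] s t /=; rewrite IH. Qed.

Lemma alt_rcons s t n : alt s t n.+1 = rcons (alt s t n) (alt_letter s t n).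
Proof.
elim: n s t => [//|n IH] s t.
by rewrite -[alt s t n.+2]/(s :: alt t s n.+1) IH /alt_letter /= if_neg.
Qed.

Lemma alt_letter_span2 i j n : (alt_letter i j n == i) || (alt_letter i j n == j).
Proof. by rewrite /alt_letter; case: (odd n); rewrite eqxx ?orbT. Qed.

Lemma word2_alt i j n : word2 i j (alt i j n) && word2 i j (alt j i n).
Proof. by elim: n => [//|n /andP[h1 h2]] /=; rewrite h1 h2 !eqxx !orbT. Qed.

Lemma word2_altl i j n : word2 i j (alt i j n).
Proof. by case/andP: (word2_alt i j n). Qed.

Lemma word2_altr i j n : word2 i j (alt j i n).
Proof. by case/andP: (word2_alt i j n). Qed.

Lemma alt_add s t m n :
  alt s t (m + n) = alt s t m ++ (if odd m then alt t s n else alt s t n).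
Proof. by elim: m s t => [//|m IH] s t; rewrite addSn /= IH; case: (odd m). Qed.

Lemma rev_alt s t n : rev (alt s t n) = if odd n then alt s t n else alt t s n.
Proof.
elim: n => [//|n IH]; rewrite [in LHS]alt_rcons rev_rcons IH /alt_letter /=.
by case: (odd n).
Qed.

Definition pos_roots2 z i j (s : seq vec) :=
  uniq s /\ forall v, v \in s <-> [/\ R z v, in_span2 i j v & nonneg v].

Lemma pos_roots2_sym z i j s : pos_roots2 z i j s -> pos_roots2 z j i s.
Proof.
case=> hu hs; split=> // v; rewrite hs.
by split; case=> h1 h2 h3; split=> //; apply: in_span2_sym.
Qed.

Lemma wact_inv_rcons_alpha x w c : wact_inv x (rcons w c) (alpha c) = - wact_inv x w (alpha c).
Proof. by rewrite wact_inv_rcons -{1}(rhoK (walk x w) c) sigma_alpha wact_invN. Qed.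

Section AlternatingInversions.
Variables (z : A) (i j : I) (s : seq vec).
Hypothesis hs : pos_roots2 z i j s.

Let inverted t b :=
  [/\ R z b, in_span2 i j b, nonneg b & nonpos (wact z (alt i j t) b)].

(* As long as [t] does not exceed the number of positive roots of the rank two
   subsystem, each letter of [alt i j t] inverts one new positive root. *)
Let alt_inversions_spec t :=
  uniq (inversions z (alt i j t)) /\ {in inversions z (alt i j t), forall b, inverted t b}.

Lemma alt_last_inversion_nonpos t :
  {in inversions z (alt i j t.+1), forall b, inverted t.+1 b} ->
  nonpos (wact_inv z (alt i j t.+1) (alpha (alt_letter i j t))).
Proof.
rewrite alt_rcons wact_inv_rcons_alpha opprK => Hinv.
have last_inv : wact_inv z (alt i j t) (alpha (alt_letter i j t)) \in
    inversions z (rcons (alt i j t) (alt_letter i j t)).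
  by rewrite inversions_rcons mem_rcons mem_head.
by have [] := Hinv _ last_inv.
Qed.

Lemma alt_next_inversion_pos t : alt_inversions_spec t -> (t < size s)%N ->
  nonneg (wact_inv z (alt i j t) (alpha (alt_letter i j t))).
Proof.
move=> [_ Hinv] ts; have gr := @root_wact_inv z (alt i j t) _ (root_alpha _ (alt_letter i j t)).
case: (root_sign gr) => // gn; clear gr.
have nonpos_ij k : (k == i) || (k == j) -> nonpos (wact_inv z (alt i j t) (alpha k)).
  case: t Hinv gn ts => [|t] Hinv gn _.
    by case: (root_nonneg_nonpos (root_alpha z i) (nonneg_alpha i) gn).
  move: gn (alt_last_inversion_nonpos Hinv); rewrite /alt_letter /=.
  by case: (odd t) => /= gn hl /orP[]/eqP->.
have : {subset s <= inversions z (alt i j t)}.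
  move=> b /hs.2 [hb bspan bn]; apply: mem_inversions_of_nonpos => // k.
  have [->|ki] := eqVneq k i; first by move=> _; apply: nonpos_ij; rewrite eqxx.
  have [->|kj] := eqVneq k j; first by move=> _; apply: nonpos_ij; rewrite eqxx orbT.
  by rewrite (wact_coord_out _ _ (word2_altl i j t)) // bspan // eqxx.
move/(uniq_leq_size hs.1); rewrite size_inversions size_alt.
by rewrite leqNgt ts.
Qed.

Lemma alt_inversions t : (t <= size s)%N -> alt_inversions_spec t.
Proof.
elim: t => [_|t IH ts]; first by split.
have [Hu Hinv] := IH (ltnW ts); have gn := alt_next_inversion_pos (IH (ltnW ts)) ts.
move: gn; set c := alt_letter i j t; set g := wact_inv z (alt i j t) (alpha c) => gn.
rewrite /alt_inversions_spec /inverted alt_rcons inversions_rcons rcons_uniq Hu andbT; split.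
  apply/negP => /Hinv [_ _ _]; rewrite wact_invK.
  exact: root_nonneg_nonpos (root_alpha _ c) (nonneg_alpha c).
move=> b; rewrite mem_rcons inE => /orP[/eqP->|/Hinv [hb bspan bn bp]].
  split=> //; first exact/root_wact_inv/root_alpha.
    by apply: wact_inv_span2; [apply: word2_altl | apply: alpha_span2; apply: alt_letter_span2].
  by rewrite wact_rcons wact_invK sigma_alpha opprK; apply: nonneg_alpha.
by split=> //; apply: nonpos_wact_rcons.
Qed.

Lemma nonpos_alt_alpha t : (0 < t <= size s)%N -> nonpos (wact z (alt i j t) (alpha i)).
Proof.
case: t => [//|t] /= ts; have [_ Hinv] := alt_inversions ts.
by have [] := Hinv (alpha i) (mem_head _ _).
Qed.

Lemma nonpos_alt_full b : b \in s -> nonpos (wact z (alt i j (size s)) b).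
Proof.
move=> bs; have [Hu Hinv] := alt_inversions (leqnn (size s)).
have sub : {subset inversions z (alt i j (size s)) <= s}.
  by move=> v /Hinv [h1 h2 h3 _]; apply/hs.2.
have le : (size s <= size (inversions z (alt i j (size s))))%N.
  by rewrite size_inversions size_alt.
have [_ e] := uniq_min_size Hu sub le.
by have [] := Hinv b; rewrite ?e.
Qed.

End AlternatingInversions.

Lemma alpha_pos_roots2 z i j c s : (c == i) || (c == j) -> pos_roots2 z i j s -> alpha c \in s.
Proof.
move=> hc [_ hs]; apply/hs; split; [exact: root_alpha | exact: alpha_span2 | exact: nonneg_alpha].
Qed.

(* [sigma z c] maps the positive roots other than [alpha c] into those at [rho c z]. *)
Lemma size_pos_roots2_rho_le z i j c s s' : (c == i) || (c == j) ->
  pos_roots2 z i j s -> pos_roots2 (rho c z) i j s' -> (size s <= size s')%N.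
Proof.
move=> hc hs hs'; have [[hu hsE] [hu' hsE']] := (hs, hs').
have cs := alpha_pos_roots2 hc hs; have cs' := alpha_pos_roots2 hc hs'.
have sub : {subset map (sigma z c) (rem (alpha c) s) <= rem (alpha c) s'}.
  move=> v /mapP [b]; rewrite (mem_rem_uniq _ hu) => /andP[bc /hsE [hb bspan bn]] ->.
  rewrite (mem_rem_uniq _ hu'); apply/andP; split.
    apply/eqP => e; apply: (root_nonneg_nonpos hb bn).
    by rewrite -(sigmaK z c b) e -{1}(rhoK z c) sigma_alpha opprK; apply: nonneg_alpha.
  apply/hsE'; split; [exact: root_sigma | | exact: sigma_pos_root].
  by move=> k ki kj; rewrite sigma_coord_neq ?bspan //; case/orP: hc => /eqP ->.
have map_uniq : uniq (map (sigma z c) (rem (alpha c) s)).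
  by rewrite (map_inj_uniq (can_inj (sigmaK z c))) rem_uniq.
have := uniq_leq_size map_uniq sub; rewrite size_map !size_rem //.
have s_gt0 : (0 < size s)%N by move: cs; case: (s).
have s'_gt0 : (0 < size s')%N by move: cs'; case: (s').
by rewrite -[size s](prednK s_gt0) -[size s'](prednK s'_gt0).
Qed.

Lemma size_pos_roots2_rho z i j c s s' : (c == i) || (c == j) ->
  pos_roots2 z i j s -> pos_roots2 (rho c z) i j s' -> size s = size s'.
Proof.
move=> hc hs hs'; apply/eqP; rewrite eqn_leq (size_pos_roots2_rho_le hc hs hs').
by apply: (size_pos_roots2_rho_le hc hs'); rewrite rhoK.
Qed.

Hypothesis fin : forall x, finite_pred (R x).

Lemma pos_roots2_exists z i j : exists s, pos_roots2 z i j s.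
Proof.
have [l hl] := fin z.
have /finite_pred_enum : finite_pred (fun v => [/\ R z v, in_span2 i j v & nonneg v]).
  by exists l => v [/hl].
by case=> s hs; exists s.
Qed.

Lemma size_pos_roots2_walk z i j w s s' : word2 i j w ->
  pos_roots2 z i j s -> pos_roots2 (walk z w) i j s' -> size s = size s'.
Proof.
elim: w z s => [|c w IH] z s /=.
  move=> _ [hu hs] [hu' hs']; apply/eqP; rewrite eqn_leq.
  by apply/andP; split; apply: uniq_leq_size => // v; [move/hs/hs' | move/hs'/hs].
case/andP=> hc hw hs hs'; have [s1 hs1] := pos_roots2_exists (rho c z) i j.
by rewrite (size_pos_roots2_rho hc hs hs1) (IH _ _ hw hs1 hs').
Qed.

Definition det2 i j (f : vec -> vec) :=
  f (alpha i) i * f (alpha j) j - f (alpha i) j * f (alpha j) i.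

Lemma pairing_span2 y c i j v : i != j -> in_span2 i j v ->
  pairing y c v = C y c i * v i + C y c j * v j.
Proof.
by move=> ij hv; rewrite {1}(span2_expand ij hv) pairingD !pairingMz !pairing_alpha !(mulrC (C _ _ _)).
Qed.

Lemma det2_sigma y c i j u v : i != j -> (c == i) || (c == j) ->
  in_span2 i j u -> in_span2 i j v ->
  sigma y c u i * sigma y c v j - sigma y c u j * sigma y c v i = - (u i * v j - u j * v i).
Proof.
move=> ij hc hu hv; have ji : j != i by rewrite eq_sym.
rewrite !sigma_coord !(pairing_span2 y c ij) //.
by case/orP: hc => /eqP ->; rewrite cartan_diag !alpha_id !alpha_neq //; ring.
Qed.

Lemma det2_wact z i j w : i != j -> word2 i j w -> det2 i j (wact z w) = (-1) ^+ size w.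
Proof.
move=> ij; have ji : j != i by rewrite eq_sym.
elim/last_ind: w => [|w c IH]; rewrite ?word2_rcons.
  by rewrite /det2 /= !alpha_id (alpha_neq ij) (alpha_neq ji) mulr0 subr0 mulr1.
case/andP=> hw hc; rewrite /det2 !wact_rcons det2_sigma //; last 2 first.
- by apply: wact_span2 => //; apply: alpha_span2l.
- by apply: wact_span2 => //; apply: alpha_span2r.
by rewrite -/(det2 i j (wact z w)) IH // size_rcons exprS mulN1r.
Qed.

Lemma walk_alt_double z i j n : walk z (alt i j (2 * n)%N) = iter n (fun b => rho j (rho i b)) z.
Proof.
elim: n z => [//|n IH] z; rewrite mulnS.
by rewrite [walk _ _]/= IH iterSr.
Qed.

Lemma pos_span2_nat i j (v : vec) : i != j ->
  (exists p q : nat, v = alpha i *+ p + alpha j *+ q) <-> in_span2 i j v /\ nonneg v.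
Proof.
move=> ij; split=> [[p [q ->]]|[hv hn]].
  split=> [k ki kj|k]; rewrite !ffunE !ffunMnE.
    by rewrite !alpha_neq 1?eq_sym // !mul0rn addr0.
  by apply: addr_ge0; apply: mulrn_wge0; apply: nonneg_alpha.
exists `|v i|%N, `|v j|%N; rewrite {1}(span2_expand ij hv).
by congr (_ + _); rewrite -mulrz_nat natz gez0_abs.
Qed.

Lemma walk_alt_loop z i j s : i != j -> pos_roots2 z i j s -> walk z (alt i j (2 * size s)%N) = z.
Proof.
move=> ij [hu hs]; rewrite walk_alt_double; case: HR => _ _ _ HR4.
apply: (HR4 z j i); first by rewrite eq_sym.
exists s; split=> // v; rewrite hs (pos_span2_nat v); last by rewrite eq_sym.
by split=> [[hv /in_span2_sym hv2 hn]|[hv [/in_span2_sym hv2 hn]]].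
Qed.

(* The first half of [alt i j (2 m)] makes every positive root of the rank two
   subsystem negative, and the second half makes them all positive again. *)
Lemma nonneg_alt_double z i j s b : i != j -> pos_roots2 z i j s -> b \in s ->
  nonneg (wact z (alt i j (2 * size s)%N) b).
Proof.
move=> ij hs bs; set m := size s.
have [sy hsy] := pos_roots2_exists (walk z (alt i j m)) i j.
have msy : m = size sy := size_pos_roots2_walk (word2_altl i j m) hs hsy.
rewrite mul2n -addnn alt_add wact_cat; set d := wact z (alt i j m) b.
have [hb bspan bn] := (hs.2 b).1 bs.
have dsy : - d \in sy.
  apply/hsy.2; split; [exact/rootN/root_wact | | exact: nonpos_alt_full].
  by move=> k ki kj; rewrite ffunE (wact_span2 _ (word2_altl i j m) bspan) ?oppr0.
rewrite -[d]opprK wactN; case: (odd m).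
  by have := nonpos_alt_full (pos_roots2_sym hsy) dsy; rewrite -msy.
by have := nonpos_alt_full hsy dsy; rewrite -msy.
Qed.

(* Iterating a loop [w] on [b] gives the roots [b + n u]; by finiteness this
   arithmetic progression must be constant. *)
Lemma loop_fixes_root z w b u : walk z w = z -> R z b ->
  wact z w b = b + u -> wact z w u = u -> u = 0.
Proof.
move=> loop hb fb fu.
have iterE n : iter n (wact z w) b = b + u *+ n.
  elim: n => [|n IH]; first by rewrite addr0.
  by rewrite iterS IH wactD wactMn fu fb mulrSr addrA addrAC.
have root_iter n : R z (b + u *+ n).
  by rewrite -iterE; elim: n => [//|n IH]; rewrite iterS -{1}loop; apply: root_wact.
apply: contraTeq isT => u0.
have /existsP [k uk] : [exists k, u k != 0].
  by apply: contraR u0 => /existsPn uk; apply/eqP/ffunP => k; rewrite ffunE; apply/eqP/negPn.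
have [L hL] := fin z.
have inj : injective (fun n => b + u *+ n).
  by move=> n1 n2 /addrI /(congr1 (fun v : vec => v k)); rewrite !ffunMnE; apply: mulrIn.
have progression_uniq : uniq (map (fun n => b + u *+ n) (iota 0 (size L).+1)).
  by rewrite (map_inj_uniq inj) iota_uniq.
have sub : {subset map (fun n => b + u *+ n) (iota 0 (size L).+1) <= L}.
  by move=> v /mapP [n _ ->]; apply/InP/hL.
by have := uniq_leq_size progression_uniq sub; rewrite size_map size_iota ltnn.
Qed.

Lemma wact_span2_coord x w i j v k : i != j -> in_span2 i j v ->
  wact x w v k = wact x w (alpha i) k * v i + wact x w (alpha j) k * v j.
Proof.
by move=> ij hv; rewrite {1}(span2_expand ij hv) wactD !wactMz !ffunE !ffunMzE !mulrzz.
Qed.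

(* The action of [alt i j (2 m)] on the span of [alpha i], [alpha j] is a
   nonnegative integer matrix of determinant one whose inverse, the action of
   [alt j i (2 m)], is nonnegative as well. *)
Lemma alt_double_fix_alpha z i j s : i != j -> pos_roots2 z i j s ->
  let f := wact z (alt i j (2 * size s)%N) in f (alpha i) = alpha i /\ f (alpha j) = alpha j.
Proof.
move=> ij hs f; have ji : j != i by rewrite eq_sym.
have gf v : wact z (alt j i (2 * size s)%N) (f v) = v.
  by rewrite -[RHS](wactK z (alt i j (2 * size s)%N)) /wact_inv walk_alt_loop // rev_alt oddM.
have f_span c : (c == i) || (c == j) -> in_span2 i j (f (alpha c)).
  by move=> hc; apply: wact_span2 (word2_altl i j _) (alpha_span2 hc).
have coord c k : (c == i) || (c == j) ->
    let g := wact z (alt j i (2 * size s)%N) in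
    alpha c k = g (alpha i) k * f (alpha c) i + g (alpha j) k * f (alpha c) j.
  move=> hc g; have /(congr1 (fun v : vec => v k)) <- := gf (alpha c).
  exact: wact_span2_coord (f_span c hc).
have hi : (i == i) || (i == j) by rewrite eqxx.
have hj : (j == i) || (j == j) by rewrite eqxx orbT.
have e1 := coord i i hi; have e2 := coord i j hi; have e3 := coord j i hj; have e4 := coord j j hj.
rewrite alpha_id in e1; rewrite alpha_id in e4; rewrite (alpha_neq ij) in e2; rewrite (alpha_neq ji) in e3.
have det : det2 i j f = 1 by rewrite det2_wact ?word2_altl // size_alt exprM sqrrN expr1n.
have nn := nonneg_alt_double ij hs; have nn' := nonneg_alt_double ji (pos_roots2_sym hs).
have [ai aj] := (alpha_pos_roots2 hi hs, alpha_pos_roots2 hj hs).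
have [fii fij fji fjj] := nonneg_mx2_inv_id (nn _ ai i) (nn _ ai j) (nn _ aj i) (nn _ aj j)
  (nn' _ ai i) (nn' _ ai j) (nn' _ aj i) (nn' _ aj j) (esym e1) (esym e2) (esym e3) (esym e4) det.
rewrite (span2_expand ij (f_span _ hi)) (span2_expand ij (f_span _ hj)).
by rewrite fii fij fji fjj !mulr1z !mulr0z addr0 add0r.
Qed.

Lemma alt_double_id z i j s : i != j -> pos_roots2 z i j s ->
  wact z (alt i j (2 * size s)%N) =1 id.
Proof.
move=> ij hs; have [fi fj] := alt_double_fix_alpha ij hs.
set W := alt i j _ in fi fj *; have word : word2 i j W := word2_altl i j _.
apply: (@wact_eq_on_alpha _ _ z [::]) => k /=.
have [->|ki] := eqVneq k i => //; have [->|kj] := eqVneq k j => //.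
set u := wact z W (alpha k) - alpha k.
have u_span : in_span2 i j u.
  by move=> l li lj; rewrite /u vecB (wact_coord_out _ _ word) // subrr.
have fu : wact z W u = u by rewrite {1}(span2_expand ij u_span) wactD !wactMz fi fj -span2_expand.
have fk : wact z W (alpha k) = alpha k + u by rewrite /u addrC subrK.
have := loop_fixes_root (walk_alt_loop ij hs) (root_alpha z k) fk fu.
by rewrite /u => /eqP; rewrite subr_eq0 => /eqP.
Qed.

Lemma braid z i j s : i != j -> pos_roots2 z i j s ->
  wequiv z (alt i j (size s)) (alt j i (size s)).
Proof.
move=> ij hs; set W := alt i j (size s); set W' := alt j i (size s).
have W2 : alt i j (2 * size s)%N = W ++ rev W'.
  by rewrite /W' rev_alt -alt_add addnn -mul2n.
have loop := walk_alt_loop ij hs; have loop_id := alt_double_id ij hs.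
rewrite W2 walk_cat in loop; rewrite W2 in loop_id.
have walkW : walk z W' = walk z W by rewrite -{1}loop -{2}(revK W') walk_revK.
split=> // v; rewrite -[LHS](wact_invK z W'); congr (wact z W' _).
by rewrite /wact_inv walkW -wact_cat loop_id.
Qed.

Definition alt_equiv x i j q r := wequiv x q (alt i j r) \/ wequiv x q (alt j i r).

Lemma alt_equiv_sym x i j q r : alt_equiv x i j q r -> alt_equiv x j i q r.
Proof. by rewrite /alt_equiv or_comm. Qed.

Lemma alt_equiv_cons x i j q r :
  alt_equiv (rho i x) i j q r -> exists2 r', (r' <= r.+1)%N & alt_equiv x i j (i :: q) r'.
Proof.
case=> e; last by exists r.+1 => //; left; apply: wequiv_cons.
case: r e => [|r] e; first by exists 1%N => //; left; apply: wequiv_cons.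
exists r; first exact: leqW.
by right; apply: wequiv_trans (wequiv_cons e) (wequiv_cancel _ _ _).
Qed.

Lemma word2_alt_equiv x i j q : word2 i j q ->
  exists2 r, (r <= size q)%N & alt_equiv x i j q r.
Proof.
elim: q x => [|c q IH] x; first by exists 0%N => //; left.
case/andP=> /orP[]/eqP-> hq.
  have [r rq e] := IH (rho i x) hq; have [r' r'r e'] := alt_equiv_cons e.
  by exists r' => //; apply: leq_trans r'r _.
have [r rq e] := IH (rho j x) hq; have [r' r'r e'] := alt_equiv_cons (alt_equiv_sym e).
by exists r'; [apply: leq_trans r'r _ | apply: alt_equiv_sym].
Qed.

Lemma alt_long_equiv x i j s r : i != j -> pos_roots2 x i j s -> (size s <= r)%N ->
  exists w', [/\ word2 i j w', size w' = r.-1 & wequiv x (alt j i r) (i :: w')].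
Proof.
move=> ij hs sr; set m := size s; have ji : j != i by rewrite eq_sym.
have hi : (i == i) || (i == j) by rewrite eqxx.
have m_gt0 : (0 < m)%N by move: (alpha_pos_roots2 hi hs); rewrite /m; case: (s).
set rest := if odd m then alt i j (r - m) else alt j i (r - m).
have rE : alt j i r = alt j i m ++ rest by rewrite -alt_add subnKC.
have br := braid ji (pos_roots2_sym hs); rewrite -/m in br.
exists (alt j i m.-1 ++ rest); split.
- by rewrite word2_cat word2_altr /rest; case: (odd m); rewrite ?word2_altl ?word2_altr.
- by rewrite size_cat size_alt /rest; case: (odd m); rewrite size_alt; lia.
- have altE : alt i j m = i :: alt j i m.-1 by rewrite -{1}(prednK m_gt0).
  by rewrite rE -cat_cons -altE; apply: wequiv_catr.
Qed.

Lemma alt_reduced_pos x i j q : i != j -> word2 i j q ->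
  (forall w', word2 i j w' -> wequiv (rho i x) w' (i :: q) -> (size q <= size w')%N) ->
  nonneg (wact x q (alpha i)).
Proof.
move=> ij hq min_q; have [r rq [e|e]] := word2_alt_equiv x hq; rewrite e.2.
  case: r rq e => [|r] rq e; first exact: nonneg_alpha.
  have e' : wequiv (rho i x) (i :: q) (alt j i r).
    by apply: wequiv_trans (wequiv_cancel _ _ _); apply: wequiv_cons; rewrite rhoK.
  have := min_q _ (word2_altr i j r) (wequiv_sym e'); rewrite size_alt.
  by move/(leq_trans rq); rewrite ltnn.
have e_y : wequiv (rho i x) (i :: q) (i :: alt j i r).
  by apply: wequiv_cons; rewrite rhoK.
have [s hs] := pos_roots2_exists (rho i x) i j.
have [rs|sr] := leqP r.+1 (size s).
  have := @nonpos_alt_alpha _ _ _ _ hs r.+1 rs; rewrite -[alt i j r.+1]/(i :: alt j i r).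
  by rewrite wact_cons sigma_alpha rhoK wactN opprK.
have [sx hsx] := pos_roots2_exists x i j.
have hi : (i == i) || (i == j) by rewrite eqxx.
have sxr : (size sx <= r)%N by rewrite (size_pos_roots2_rho hi hsx hs).
have [w' [hw' sw' e']] := alt_long_equiv ij hsx sxr.
have e_w' : wequiv (rho i x) w' (i :: q).
  apply: wequiv_sym (wequiv_trans e_y _).
  by apply: wequiv_trans (wequiv_cancel _ _ w'); apply: wequiv_cons; rewrite rhoK.
have sx_gt0 : (0 < size sx)%N by move: (alpha_pos_roots2 hi hsx); case: (sx).
have := min_q _ hw' e_w'; rewrite sw'; move: rq sxr sx_gt0; lia.
Qed.

(** * The exchange property *)

Definition length_ge x w n := forall w', wequiv x w' w -> (n <= size w')%N.

(* [p] = [q] [pp] with [q] in the parabolic subgroupoid generated by [i], [j]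
   and [pp] as short as possible. *)
Definition min_split x i j p q pp :=
  [/\ word2 i j q, wequiv x (q ++ pp) p, (size pp + size q <= size p)%N &
      forall q' pp', word2 i j q' -> wequiv x (q' ++ pp') p ->
        (size pp' + size q' <= size p)%N -> (size pp <= size pp')%N].

Lemma min_split_exists x i j p : exists q pp, min_split x i j p q pp.
Proof.
pose P k := exists q pp, [/\ word2 i j q, wequiv x (q ++ pp) p,
  (size pp + size q <= size p)%N & size pp = k].
have [|k [[q [pp [hq e sz <-]]] min]] := @ex_minP_prop P.
  by exists (size p), [::], p; split; rewrite ?addn0.
by exists q, pp; split=> // q' pp' hq' e' sz'; apply: min; exists q', pp'.
Qed.

Lemma min_split_length x i j p q pp :
  min_split x i j p q pp -> length_ge (walk x q) pp (size pp).
Proof.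
case=> hq e sz min w' e'; rewrite leqNgt; apply/negP => lt.
by move: (min q w' hq (wequiv_trans (wequiv_catl e') e)) sz lt; lia.
Qed.

Lemma min_split_length_cons x i j p q pp c : min_split x i j p q pp ->
  (c == i) || (c == j) -> length_ge (rho c (walk x q)) (c :: pp) (size pp).
Proof.
case=> hq e sz min hc w' e'; rewrite leqNgt; apply/negP => lt.
have hqc : word2 i j (rcons q c) by rewrite word2_rcons hq.
have e'' : wequiv x (rcons q c ++ w') p.
  rewrite -cats1 -catA cat1s; apply: wequiv_trans e; apply: wequiv_catl.
  exact: wequiv_trans (wequiv_cons e') (wequiv_cancel _ _ _).
by move: (min _ _ hqc e'') sz lt; rewrite size_rcons; lia.
Qed.

Lemma exchange_pos n x p i : size p = n -> length_ge x p n ->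
  length_ge (rho i x) (i :: p) n -> nonneg (wact x p (alpha i)).
Proof.
elim/ltn_ind: n x p i => n IH x p i sp p_min ip_min.
case: p sp p_min ip_min => [|j p'] sp p_min ip_min; first exact: nonneg_alpha.
have ij : i != j.
  apply/eqP => eij; rewrite -eij in ip_min.
  have := ip_min p' (wequiv_sym (wequiv_cancel _ _ _)).
  by rewrite -sp /= ltnn.
have [q [pp split]] := min_split_exists x i j (j :: p'); have [hq e sz min] := split.
have pp_lt : (size pp < n)%N.
  by rewrite -sp ltnS (min [:: j] p') //= ?eqxx ?orbT ?addn1.
have q_min w' : word2 i j w' -> wequiv (rho i x) w' (i :: q) -> (size q <= size w')%N.
  move=> _ e'; have := ip_min (w' ++ pp).
  have e'' : wequiv (rho i x) (w' ++ pp) (i :: j :: p').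
    apply: wequiv_trans (wequiv_catr pp e') _; rewrite cat_cons.
    by apply: wequiv_cons; rewrite rhoK.
  by move=> /(_ e''); rewrite size_cat -sp; move: sz; lia.
have qi_span := wact_span2 x hq (@alpha_span2l i j).
have qi_pos := alt_reduced_pos ij hq q_min.
have pp_pos c : (c == i) || (c == j) -> nonneg (wact (walk x q) pp (alpha c)).
  move=> hc; apply: (IH _ pp_lt) => //; first exact: min_split_length split.
  exact: min_split_length_cons split hc.
rewrite -(e.2 (alpha i)) wact_cat (span2_expand ij qi_span) wactD !wactMz => k.
rewrite !ffunE !ffunMzE !mulrzz addr_ge0 ?mulr_ge0 ?pp_pos ?eqxx ?orbT //.
Qed.

(* A shortest word [i :: w1] for such a morphism would give
   [wact (rho i x) w1 (alpha i) = - alpha i], against [exchange_pos]. *)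
Lemma walk_of_wact_id x w : wact x w =1 id -> walk x w = x.
Proof.
move=> w_id; pose P k := exists w0, size w0 = k /\ wequiv x w0 w.
have [|k [[w0 [<- e]] min]] := @ex_minP_prop P; first by exists (size w), w.
case: w0 e min => [|i w1] e min; first by rewrite -e.1.
have w1_min : length_ge (rho i x) w1 (size w1).
  by move=> w' e'; apply: (min (size (i :: w'))); exists (i :: w'); split=> //;
    apply: wequiv_trans (wequiv_cons e') e.
have iw1_min : length_ge (rho i (rho i x)) (i :: w1) (size w1).
  by rewrite rhoK => w' e'; apply/ltnW/(min (size w')); exists w'; split=> //;
    apply: wequiv_trans e' e.
have := exchange_pos erefl w1_min iw1_min.
have -> : wact (rho i x) w1 (alpha i) = - alpha i.
  by have := e.2 (- alpha i); rewrite w_id wact_cons sigmaN sigma_alpha opprK.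
by move/(_ i); rewrite ffunE alpha_id oppr_ge0.
Qed.

(** * Finiteness of the Weyl groupoid *)

Lemma finite_real_of_weyl : finite_pred (weyl_mor rho C) -> forall x, finite_pred (Rre rho C x).
Proof.
case=> s hs x; exists (List.flat_map (fun t => List.map (fun i => t.1.2 (alpha i)) (enum I)) s).
move=> v [b [w [i [_ ->]]]]; apply/List.in_flat_map; exists (wmap rho C b w, b); split.
  by apply: hs; exists w; case: (wmap rho C b w).
by apply: (List.in_map (fun i => (wmap rho C b w).2 (alpha i))); apply/InP; rewrite mem_enum.
Qed.

Hypothesis conn : connected rho.
Variable a0 : A.

(* An object is determined by the images of the simple roots under a morphism
   to [a0], since a morphism acting as the identity is an endomorphism. *)
Lemma finite_objects : exists objs : seq A, forall x, List.In x objs.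
Proof.
pose u x := epsilon (inhabits [::]) (fun w => walk x w = a0).
have walk_u x : walk x (u x) = a0.
  by apply: (epsilon_spec (inhabits [::]) (fun w => walk x w = a0)); apply: conn.
have [L0 hL0] := fin a0.
pose code x k := wact x (u x) (alpha k).
have [|x y _ _ hk|s hs] := @finite_pred_of_code A I vec (fun _ => True) L0 code.
- by move=> x _ k; apply/InP/hL0; rewrite -(walk_u x); apply/root_wact/root_alpha.
- have uxy_id : wact x (u x ++ rev (u y)) =1 id.
    apply: (@wact_eq_on_alpha _ _ x [::]) => k /=; rewrite wact_cat walk_u.
    have := hk k; rewrite /code => ->; rewrite -[a0](walk_u y).
    exact: wactK.
  have := walk_of_wact_id uxy_id; rewrite walk_cat walk_u -[a0](walk_u y) walk_revK.
  by move->.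
- by exists s => x; apply: hs.
Qed.

Lemma finite_weyl : finite_pred (weyl_mor rho C).
Proof.
have [objs hobjs] := finite_objects.
pose D a b (t : A * (vec -> vec) * A) := weyl_mor rho C t /\ t.2 = a /\ t.1.1 = b.
have [|s hs] := @finite_pred_pairs _ _ objs D.
  move=> a b; have [L hL] := fin b.
  apply: (@finite_pred_of_code _ I _ (D a b) L (fun t k => t.1.2 (alpha k))).
  - move=> [[b' f] a'] [[w hw] [/= _ eb]] k; apply/InP/hL.
    have -> : f = wact a' w by rewrite /wact hw.
    have -> : b = walk a' w by rewrite -eb -wmap_fst hw.
    exact/root_wact/root_alpha.
  - move=> [[b1 f1] a1] [[b2 f2] a2] [[w1 /= hw1] [/= ? ?]] [[w2 /= hw2] [/= ? ?]] /= hk.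
    subst.
    have ef1 : f1 = wact a w1 by rewrite /wact hw1.
    have ef2 : f2 = wact a w2 by rewrite /wact hw2.
    congr (_, _, _); apply: functional_extensionality; rewrite ef1 ef2.
    by apply: wact_eq_on_alpha => k; rewrite -ef1 -ef2 hk.
by exists s => -[[b f] a] ht; apply: (hs a b).
Qed.
End WeylGroupoid.

Local Close Scope ring_scope.
Theorem lemma2p11 (I : finType) (HI : 0 < #|I|) (A : Type) (a0 : A)
  (rho : I -> A -> A) (C : A -> I -> I -> int) (R : A -> vec I -> Prop) :
  cartan_scheme rho C -> connected rho -> root_system rho C R ->
  [<-> forall a, finite_pred (R a);
       exists a, finite_pred (R a);
       forall a, finite_pred (Rre rho C a);
       finite_pred (weyl_mor rho C)].
Proof.
move=> HC conn HR; have /card_gt0P [i0 _] := HI.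
have spread : (exists a, finite_pred (R a)) -> forall a, finite_pred (R a).
  case=> a fa b; have [w <-] := conn a b.
  exact (finite_roots_walk HC HR w fa).
apply: AllIffConj => [fin|]; first by exists a0.
apply: AllIffConj => [/spread fin a|].
  by have [l hl] := fin a; exists l => v /(root_real HR) /hl.
apply: AllIffConj => [fre|fw a].
  have fin a : finite_pred (R a) := finite_roots_of_real HC HR i0 (fre a).
  exact (finite_weyl HC HR i0 fin conn a0).
exact (finite_roots_of_real HC HR i0 (finite_real_of_weyl fw a)).
Qed.
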